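(* There exist absolute constants $c>0$ and $\alpha_0\in(0,1)$ such that for every $\alpha\in(0,\alpha_0]$ there exist a distribution $\mathcal D$ over $\mathcal X\times\{A,B\}\times\{0,1\}$, a hypothesis class $\mathcal H$ with an optimal Equal-Opportunity-constrained classifier $h^*\in\mathcal H$ on $\mathcal D$ (i.e. $h^*$ minimizes $\Pr_{\mathcal D}[h(x,z)\ne y]$ among $h\in\mathcal H$ satisfying Equal Opportunity on $\mathcal D$), and a malicious adversary of power $\alpha$, i.e. a distribution $\mathcal Q$ yielding $\widetilde{\mathcal D}=(1-\alpha)\mathcal D+\alpha\mathcal Q$, such that every hypothesis $\hat h$ (possibly randomized and not in $\mathcal H$, i.e. returned by an improper learner) satisfying Equal Opportunity on $\widetilde{\mathcal D}$ has $$\Big|\mathbb E_{\mathcal D}[\mathbf 1(\hat h(x,z)\ne y)]-\mathbb E_{\mathcal D}[\mathbf 1(h^*(x,z)\ne y)]\Big|\ge c\sqrt\alpha.$$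
   Context: Examples are triples (features $x$, group $z\in\{A,B\}$, label $y\in\{0,1\}$); hypotheses may depend on the group. Equal Opportunity on a distribution: $\Pr[h(x,z)=1\mid y=1,z=A]=\Pr[h(x,z)=1\mid y=1,z=B]$ (probabilities also over the hypothesis's randomness). *)

From HB Require Import structures.
From mathcomp Require Import all_boot all_order all_algebra.
From mathcomp Require Import reals.
Set Implicit Arguments. Unset Strict Implicit. Unset Printing Implicit Defensive.
Import Order.TTheory GRing.Theory Num.Theory.
Local Open Scope ring_scope.

(* Group z : bool, with  true = A  and  false = B.  Label y : bool (true = 1). *)
Definition grpA : bool := true.
Definition grpB : bool := false.

Definition is_distr (R : realType) (X : finType) (P : {ffun X * bool * bool -> R}) : Prop :=
  (forall e, 0 <= P e) /\ \sum_e P e = 1.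

(* A (possibly randomized) hypothesis: h (x,z) = Pr[h(x,z) = 1] in [0,1]. *)
Definition is_rhyp (R : realType) (X : finType) (h : {ffun X * bool -> R}) : Prop :=
  forall u, 0 <= h u <= 1.

Definition det_hyp (R : realType) (X : finType) (g : {ffun X * bool -> bool})
  : {ffun X * bool -> R} := [ffun u => (g u)%:R].

(* Pr_P[h(x,z) = 1 | y = 1, z = a]  (conditional probability; 0 if the
   conditioning event has probability 0, by the convention x/0 = 0). *)
Definition tpr (R : realType) (X : finType) (P : {ffun X * bool * bool -> R})
  (h : {ffun X * bool -> R}) (a : bool) : R :=
  (\sum_(x : X) P (x, a, true) * h (x, a)) / (\sum_(x : X) P (x, a, true)).

Definition equal_opp (R : realType) (X : finType) (P : {ffun X * bool * bool -> R})
  (h : {ffun X * bool -> R}) : Prop :=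
  tpr P h grpA = tpr P h grpB.

Definition err (R : realType) (X : finType) (P : {ffun X * bool * bool -> R})
  (h : {ffun X * bool -> R}) : R :=
  \sum_(e : X * bool * bool)
     P e * (if e.2 then 1 - h (e.1.1, e.1.2) else h (e.1.1, e.1.2)).

Definition mixture (R : realType) (X : finType) (alpha : R)
  (D Q : {ffun X * bool * bool -> R}) : {ffun X * bool * bool -> R} :=
  [ffun e => (1 - alpha) * D e + alpha * Q e].

Definition optimal_EO (R : realType) (X : finType) (D : {ffun X * bool * bool -> R})
  (H : {set {ffun X * bool -> bool}}) (hstar : {ffun X * bool -> bool}) : Prop :=
  hstar \in H /\ equal_opp D (det_hyp R hstar) /\
  forall g, g \in H -> equal_opp D (det_hyp R g) ->
    err D (det_hyp R hstar) <= err D (det_hyp R g).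

(* Take X = {x0, x1} (encoded as false, true) and let D put mass 1/2 on
   (x0, A, 1), mass s on (x0, B, 1) and mass 1/2 - s on (x1, B, 0), where
   s = sqrt alpha.  The classifier "accept iff x = x0" is perfect and satisfies
   Equal Opportunity on D.  The adversary adds mass alpha on (x1, B, 1): on the
   corrupted distribution the positives of group B are x0 with weight about s
   and x1 with weight alpha = s^2, so Equal Opportunity forces a hypothesis
   either to accept x1 in group B (each unit costing 1/2 - s on D) or to
   reject x0 in group A at rate at least s (1 - c) / 2, costing 1/2 per unit
   on D.  Either way the true error is at least s / 4. *)
From HB Require Import structures.
From mathcomp Require Import all_boot all_order all_algebra.
From mathcomp Require Import reals.
From mathcomp Require Import ring lra.
Set Implicit Arguments. Unset Strict Implicit. Unset Printing Implicit Defensive.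
Import Order.TTheory GRing.Theory Num.Theory.
Local Open Scope ring_scope.

Lemma big_bool3 (V : nmodType) (F : bool * bool * bool -> V) :
  \sum_e F e = \sum_x \sum_z \sum_y F (x, z, y).
Proof. by rewrite pair_big /= pair_big /=; apply: eq_bigr => -[[]]. Qed.

Section ErrorFacts.

Variables (R : realType) (X : finType).

Lemma det_hyp_rhyp (g : {ffun X * bool -> bool}) : is_rhyp (det_hyp R g).
Proof. by move=> u; rewrite ffunE; case: (g u); rewrite /= ?lexx ?ler01. Qed.

Lemma err_ge0 (P : {ffun X * bool * bool -> R}) (h : {ffun X * bool -> R}) :
  is_distr P -> is_rhyp h -> 0 <= err P h.
Proof.
move=> [P_ge0 _] h01; apply: sumr_ge0 => e _; apply: mulr_ge0 => //.
by have /andP[? ?] := h01 (e.1.1, e.1.2); case: (e.2); lra.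
Qed.

Lemma zero_err_optimal_EO (D : {ffun X * bool * bool -> R})
    (H : {set {ffun X * bool -> bool}}) (h : {ffun X * bool -> bool}) :
  is_distr D -> h \in H -> equal_opp D (det_hyp R h) ->
  err D (det_hyp R h) = 0 -> optimal_EO D H h.
Proof.
move=> Dd hH eo err0; split; [|split] => // g _ _.
by rewrite err0 err_ge0 //; apply: det_hyp_rhyp.
Qed.

End ErrorFacts.

Section Construction.

Variables (R : realType) (s : R).

Definition clean_distr : {ffun bool * bool * bool -> R} := [ffun e =>
  match e with
  | (false, true, true) => 1 / 2
  | (false, false, true) => s
  | (true, false, false) => 1 / 2 - s
  | _ => 0
  end].

Definition adversary_distr : {ffun bool * bool * bool -> R} :=
  [ffun e => (e == (true, false, true))%:R].

Definition accept_x0 : {ffun bool * bool -> bool} := [ffun u => ~~ u.1].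

Lemma clean_distr_is_distr : 0 <= s <= 1 / 2 -> is_distr clean_distr.
Proof.
move=> /andP[? ?]; split; first by move=> [[[] []] []]; rewrite ffunE /=; lra.
by rewrite big_bool3 !big_bool !ffunE /=; lra.
Qed.

Lemma adversary_distr_is_distr : is_distr adversary_distr.
Proof.
split; first by move=> e; rewrite ffunE.
by rewrite big_bool3 !big_bool !ffunE /=; lra.
Qed.

Lemma err_accept_x0 : err clean_distr (det_hyp R accept_x0) = 0.
Proof. by rewrite /err big_bool3 !big_bool !ffunE /=; ring. Qed.

Lemma equal_opp_accept_x0 : 0 < s -> equal_opp clean_distr (det_hyp R accept_x0).
Proof.
move=> s_gt0; rewrite /equal_opp /tpr !big_bool !ffunE /=.
by rewrite !mul0r !add0r !mulr1 !divff //; apply/eqP; lra.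
Qed.

Lemma err_clean_distr (h : {ffun bool * bool -> R}) :
  err clean_distr h =
  (1 - h (false, true)) / 2 + s * (1 - h (false, false)) + (1 / 2 - s) * h (true, false).
Proof. by rewrite /err big_bool3 !big_bool !ffunE /=; ring. Qed.

Lemma equal_opp_corrupted (h : {ffun bool * bool -> R}) :
  0 < s < 1 -> equal_opp (mixture (s ^+ 2) clean_distr adversary_distr) h ->
  h (false, true) * (s ^+ 2 + (1 - s ^+ 2) * s) =
  (1 - s ^+ 2) * s * h (false, false) + s ^+ 2 * h (true, false).
Proof.
move=> /andP[s_gt0 s_lt1].
rewrite /equal_opp /tpr /grpA /grpB !big_bool !ffunE /= => /eqP.
have alpha_lt1 : s ^+ 2 < 1 by nra.
rewrite eqr_div; [move=> /eqP eo | apply/eqP; nra | apply/eqP; nra].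
apply: (mulIf (_ : (1 - s ^+ 2) / 2 != 0)); first by apply/eqP; lra.
lra.
Qed.

End Construction.

(* Equal Opportunity gives s^2 (1 - c) <= (1 - a) (s^2 + (1 - s^2) s) <= 2 s (1 - a):
   rejecting x0 in group A costs at least s (1 - c) / 4, while accepting x1 in
   group B costs (1/2 - s) c >= s c / 4. *)
Lemma equal_opp_tradeoff (R : realType) (s a b c : R) :
  0 < s <= 1 / 4 -> 0 <= a <= 1 -> 0 <= b <= 1 -> 0 <= c <= 1 ->
  a * (s ^+ 2 + (1 - s ^+ 2) * s) = (1 - s ^+ 2) * s * b + s ^+ 2 * c ->
  s / 4 <= (1 - a) / 2 + s * (1 - b) + (1 / 2 - s) * c.
Proof.
move=> /andP[s_gt0 s_le] /andP[a0 a1] /andP[b0 b1] /andP[c0 c1] eo.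
have slackB : 0 <= (1 - s ^+ 2) * s * (1 - b).
  by apply: mulr_ge0; [apply: mulr_ge0|]; nra.
have eo_le : s ^+ 2 * (1 - c) <= (1 - a) * (s ^+ 2 + (1 - s ^+ 2) * s) by lra.
have weightB : s ^+ 2 + (1 - s ^+ 2) * s <= 2 * s by nra.
have : s * (s * (1 - c)) <= s * (2 * (1 - a)) by nra.
rewrite ler_pM2l // => costA.
have : 0 <= (1 / 4 - s / 4) * c by apply: mulr_ge0; lra.
nra.
Qed.

Theorem mainTheorem8 (R : realType) :
  exists (c alpha0 : R), 0 < c /\ 0 < alpha0 < 1 /\
  forall alpha : R, 0 < alpha <= alpha0 ->
  exists (X : finType) (D : {ffun X * bool * bool -> R})
         (H : {set {ffun X * bool -> bool}}) (hstar : {ffun X * bool -> bool})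
         (Q : {ffun X * bool * bool -> R}),
    is_distr D /\ optimal_EO D H hstar /\ is_distr Q /\
    forall hhat : {ffun X * bool -> R}, is_rhyp hhat ->
      equal_opp (mixture alpha D Q) hhat ->
      c * Num.sqrt alpha <= `| err D hhat - err D (det_hyp R hstar) |.
Proof.
exists (1 / 4), (1 / 16); split; first lra; split; first lra.
move=> alpha /andP[alpha_gt0 alpha_le].
set s := Num.sqrt alpha.
have s_gt0 : 0 < s by rewrite sqrtr_gt0.
have alphaE : alpha = s ^+ 2 by rewrite sqr_sqrtr // ltW.
have s_le : s <= 1 / 4 by nra.
have Dd : is_distr (clean_distr s) by apply: clean_distr_is_distr; lra.
exists bool, (clean_distr s), setT, accept_x0, (adversary_distr R).
split; [|split; [|split]] => //.
- apply: zero_err_optimal_EO => //;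
    [exact: in_setT | exact: equal_opp_accept_x0 | exact: err_accept_x0].
- exact: adversary_distr_is_distr.
move=> h h01; rewrite alphaE => /equal_opp_corrupted eo.
rewrite err_accept_x0 subr0 ger0_norm; last exact: err_ge0.
rewrite err_clean_distr mul1r mulrC.
by apply: equal_opp_tradeoff; rewrite ?h01 ?s_gt0 //; apply: eo; lra.
Qed.
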